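(* Let $K$ be a positive semidefinite kernel, let $(\mathbf{x}_i,y_i)$, $i=1,\dots,N$ with $N=n+mL$, be the augmented MU-SVM data set with costs $C_i>0$ and margins $e_{il}$ (defined in the context), and let $\boldsymbol\alpha=(\alpha_{il})$ be an optimal solution of the dual problem $$\max_{\boldsymbol\alpha}\ -\tfrac12\sum_{i,j}\sum_l\alpha_{il}\alpha_{jl}K(\mathbf{x}_i,\mathbf{x}_j)-\sum_{i,l}\alpha_{il}e_{il}\quad\text{s.t.}\quad\sum_l\alpha_{il}=0\ \forall i;\ \ \alpha_{il}\le C_i\text{ if }l=y_i;\ \ \alpha_{il}\le0\text{ if }l\ne y_i.$$ Let $SV_1=\{i: 0<\alpha_{iy_i}<C_i\}$. Then for every $i\in SV_1$: (i) $\sum_{k=1}^L\alpha_{ik}\big[\sum_j\alpha_{jk}K(\mathbf{x}_i,\mathbf{x}_j)+e_{ik}\big]=0$; (ii) for every $k\ne y_i$ with $\alpha_{ik}<0$ (strictly), $\sum_j\alpha_{jk}K(\mathbf{x}_i,\mathbf{x}_j)+e_{ik}=\sum_j\alpha_{jy_i}K(\mathbf{x}_i,\mathbf{x}_j)+e_{iy_i}$; (iii) for every $\boldsymbol\gamma_i=(\gamma_{i1},\dots,\gamma_{iL})$ with $\sum_k\gamma_{ik}=0$ and $\gamma_{ik}=0$ whenever $\alpha_{ik}=0$, one has $\sum_k\gamma_{ik}\big[\sum_j\alpha_{jk}K(\mathbf{x}_i,\mathbf{x}_j)+e_{ik}\big]=0$.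
   Context: Training samples $(\mathbf{x}_i,y_i)$, $i=1,\dots,n$, $y_i\in\{1,\dots,L\}$, have $C_i=C$ and $e_{il}=1-\delta_{il}$. Each universum sample $\mathbf{x}^*_{i'}$, $i'=1,\dots,m$, is replicated $L$ times: for $k=1,\dots,L$ the index $i=n+(i'-1)L+k$ carries $(\mathbf{x}_i,y_i)=(\mathbf{x}^*_{i'},k)$, $C_i=C^*$ and $e_{il}=-\Delta(1-\delta_{il})$, with $\Delta\ge0$. Here $\delta_{il}=1$ if $y_i=l$, else $0$. This dual is the dual of the primal $\min\frac12\sum_l\|\mathbf{w}_l\|^2+\sum_iC_i\xi_i$ s.t. $(\mathbf{w}_{y_i}-\mathbf{w}_l)^\top\phi(\mathbf{x}_i)\ge e_{il}-\xi_i$, with $\mathbf{w}_l=\sum_i\alpha_{il}\phi(\mathbf{x}_i)$, where $\phi$ is the feature map of $K$. *)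

From mathcomp Require Import all_boot all_order all_algebra.
Set Implicit Arguments. Unset Strict Implicit. Unset Printing Implicit Defensive.
Import Order.TTheory GRing.Theory Num.Theory.
Local Open Scope ring_scope.

Definition psd_kernel (R : realFieldType) (X : Type) (K : X -> X -> R) : Prop :=
  (forall x y, K x y = K y x) /\
  (forall (p : nat) (x : 'I_p -> X) (c : 'I_p -> R),
      0 <= \sum_(i < p) \sum_(j < p) c i * c j * K (x i) (x j)).

(* Index set of the augmented data set: n training samples, and m universum
   samples each replicated L times (one copy per class k).  Its cardinality
   is n + m*L. *)
Definition aug_idx (n m L : nat) : finType := ('I_n + 'I_m * 'I_L)%type.

Definition aug_x (X : Type) (n m L : nat) (xtr : 'I_n -> X) (xu : 'I_m -> X)
  (i : aug_idx n m L) : X :=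
  match i with inl j => xtr j | inr (i', _) => xu i' end.

Definition aug_y (n m L : nat) (ytr : 'I_n -> 'I_L) (i : aug_idx n m L) : 'I_L :=
  match i with inl j => ytr j | inr (_, k) => k end.

Definition aug_C (R : realFieldType) (n m L : nat) (C Cs : R)
  (i : aug_idx n m L) : R :=
  match i with inl _ => C | inr _ => Cs end.

Definition aug_e (R : realFieldType) (n m L : nat) (ytr : 'I_n -> 'I_L) (Delta : R)
  (i : aug_idx n m L) (l : 'I_L) : R :=
  match i with
  | inl j => 1 - (ytr j == l)%:R
  | inr (_, k) => - Delta * (1 - (k == l)%:R)
  end.

Definition dual_obj (R : realFieldType) (X : Type) (I : finType) (L : nat)
  (K : X -> X -> R) (x : I -> X) (e : I -> 'I_L -> R) (a : I -> 'I_L -> R) : R :=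
  - (1/2) * (\sum_i \sum_j \sum_(l < L) a i l * a j l * K (x i) (x j))
  - \sum_i \sum_(l < L) a i l * e i l.

Definition dual_feasible (R : realFieldType) (I : finType) (L : nat)
  (y : I -> 'I_L) (C : I -> R) (a : I -> 'I_L -> R) : Prop :=
  forall i, \sum_(l < L) a i l = 0 /\ a i (y i) <= C i /\
            (forall l, l != y i -> a i l <= 0).

Definition dual_optimal (R : realFieldType) (X : Type) (I : finType) (L : nat)
  (K : X -> X -> R) (x : I -> X) (y : I -> 'I_L) (C : I -> R)
  (e : I -> 'I_L -> R) (a : I -> 'I_L -> R) : Prop :=
  dual_feasible y C a /\
  forall b, dual_feasible y C b -> dual_obj K x e b <= dual_obj K x e a.

Definition grad_term (R : realFieldType) (X : Type) (I : finType) (L : nat)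
  (K : X -> X -> R) (x : I -> X) (e : I -> 'I_L -> R) (a : I -> 'I_L -> R)
  (i : I) (k : 'I_L) : R :=
  \sum_j a j k * K (x i) (x j) + e i k.

(** Perturbing an optimal dual solution inside row [i] along a direction
    [gamma] that sums to zero and vanishes where [alpha_i] does keeps it
    feasible for all small steps [t] of either sign: the only active
    constraints of row [i] are the zero entries, and [alpha_(i y_i) < C_i].
    Since the dual objective is quadratic, its value along this line is
    [D(alpha) - t G - t^2 c] with [G = sum_k gamma_k g_ik]; a quadratic with a
    local maximum at [t = 0] has no linear term, so [G = 0].  This is (iii);
    (i) and (ii) are the instances [gamma = alpha_i] and
    [gamma = delta_k - delta_(y_i)]. *)
From mathcomp Require Import all_boot all_order all_algebra.
From mathcomp Require Import lra ring.
Import Order.TTheory GRing.Theory Num.Theory.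
Local Open Scope ring_scope.

Lemma quadratic_ge0_near0 {R : realFieldType} (d G c : R) :
  0 < d -> (forall t, `|t| <= d -> 0 <= t * G + t ^+ 2 * c) -> G = 0.
Proof.
move=> d_gt0 q_ge0; apply/eqP; apply: contraT => G_neq0.
have nG_gt0 : 0 < `|G| by rewrite normr_gt0.
pose s := Num.min (d / `|G|) (1 / (`|c| + 1)).
have c1_gt0 : 0 < `|c| + 1 by rewrite ltr_pwDr.
have s_gt0 : 0 < s by rewrite lt_min !divr_gt0.
have sG_le : s * `|G| <= d by rewrite -ler_pdivlMr // ge_min lexx.
have sc_lt1 : s * c < 1.
  have : s <= 1 / (`|c| + 1) by rewrite ge_min lexx orbT.
  rewrite ler_pdivlMr // => h; have := ler_norm c; nra.
have := q_ge0 (- (s * G)).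
rewrite normrN normrM (gtr0_norm s_gt0) => /(_ sG_le).
have -> : - (s * G) * G + (- (s * G)) ^+ 2 * c = - (s * G ^+ 2 * (1 - s * c)).
  by ring.
rewrite oppr_ge0 lt_geF //.
by rewrite mulr_gt0 ?subr_gt0 // mulr_gt0 // exprn_even_gt0.
Qed.

Lemma finite_pos_lower_bound {R : realDomainType} (T : finType) (P : pred T)
    (r : T -> R) :
  {in P, forall l, 0 < r l} -> exists2 d, 0 < d & {in P, forall l, d <= r l}.
Proof.
move=> r_gt0; case: (pickP P) => [l0 Pl0|noP]; last first.
  by exists 1 => // l; rewrite unfold_in noP.
case: (arg_minP r Pl0) => lmin Plmin min_le.
by exists (r lmin) => [|l Pl]; [exact: r_gt0 | exact: min_le].
Qed.

Lemma sum_natr_eq_mul {R : pzSemiRingType} {I : finType} (i : I) (F : I -> R) :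
  \sum_j (j == i)%:R * F j = F i.
Proof.
rewrite (bigD1 i) //= eqxx mul1r big1 ?addr0 // => j /negbTE ->.
by rewrite mul0r.
Qed.

Lemma sum_natr_eq {R : pzSemiRingType} {I : finType} (i : I) :
  \sum_j ((j == i)%:R : R) = 1.
Proof.
rewrite -[RHS](sum_natr_eq_mul i (fun=> 1)).
by apply: eq_bigr => j _; rewrite mulr1.
Qed.

Section DualProblem.
Set Implicit Arguments.
Unset Strict Implicit.
Variables (R : realFieldType) (X : Type) (I : finType) (L : nat).
Variables (K : X -> X -> R) (x : I -> X) (y : I -> 'I_L) (C : I -> R).
Variable e : I -> 'I_L -> R.
Hypothesis K_sym : forall u v, K u v = K v u.

Definition kform (a b : I -> 'I_L -> R) : R :=
  \sum_i \sum_j \sum_(l < L) a i l * b j l * K (x i) (x j).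

Definition single_row (i : I) (gamma : 'I_L -> R) : I -> 'I_L -> R :=
  fun j l => (j == i)%:R * gamma l.

Lemma kformC a b : kform a b = kform b a.
Proof.
rewrite /kform exchange_big; apply: eq_bigr => i _; apply: eq_bigr => j _.
by apply: eq_bigr => l _; rewrite K_sym; ring.
Qed.

Lemma dual_objE a :
  dual_obj K x e a = - (1 / 2) * kform a a - \sum_j \sum_(l < L) a j l * e j l.
Proof. by []. Qed.

Lemma dual_obj_shift (a b : I -> 'I_L -> R) (t : R) :
  dual_obj K x e (fun j l => a j l + t * b j l) =
  dual_obj K x e a - t * (kform b a + \sum_j \sum_(l < L) b j l * e j l)
  - t ^+ 2 / 2 * kform b b.
Proof.
have quad : kform (fun j l => a j l + t * b j l) (fun j l => a j l + t * b j l)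
    = kform a a + t * kform a b + t * kform b a + t ^+ 2 * kform b b.
  rewrite /kform !mulr_sumr -!big_split; apply: eq_bigr => i _ /=.
  rewrite !mulr_sumr -!big_split; apply: eq_bigr => j _ /=.
  rewrite !mulr_sumr -!big_split; apply: eq_bigr => l _ /=.
  ring.
have lin : \sum_j \sum_(l < L) (a j l + t * b j l) * e j l =
    \sum_j \sum_(l < L) a j l * e j l + t * \sum_j \sum_(l < L) b j l * e j l.
  rewrite mulr_sumr -big_split; apply: eq_bigr => j _ /=.
  rewrite mulr_sumr -big_split; apply: eq_bigr => l _ /=.
  ring.
by rewrite !dual_objE quad lin (kformC a b); field.
Qed.

Lemma sum_single_row i gamma (F : I -> 'I_L -> R) :
  \sum_j \sum_(l < L) single_row i gamma j l * F j l =
  \sum_(l < L) gamma l * F i l.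
Proof.
rewrite -(sum_natr_eq_mul i (fun j => \sum_(l < L) gamma l * F j l)).
apply: eq_bigr => j _; rewrite mulr_sumr.
by apply: eq_bigr => l _; rewrite /single_row mulrA.
Qed.

Lemma single_row_slope (a : I -> 'I_L -> R) i gamma :
  kform (single_row i gamma) a
    + \sum_j \sum_(l < L) single_row i gamma j l * e j l =
  \sum_(l < L) gamma l * grad_term K x e a i l.
Proof.
have -> : kform (single_row i gamma) a = \sum_j \sum_(l < L)
    single_row i gamma j l * \sum_k a k l * K (x j) (x k).
  apply: eq_bigr => j _; rewrite exchange_big; apply: eq_bigr => l _.
  by rewrite mulr_sumr; apply: eq_bigr => k _; rewrite mulrA.
by rewrite !sum_single_row -big_split; apply: eq_bigr => l _; rewrite mulrDr.
Qed.

Lemma dual_feasibleP b :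
  dual_feasible y C b <->
  forall j, \sum_(l < L) b j l = 0 /\
            forall l, b j l <= (if l == y j then C j else 0).
Proof.
split=> feas j; have [sum_b le_b] := feas j.
  split=> // l; case: eqP => [-> | /eqP]; first by case: le_b.
  by case: le_b => _; apply.
split=> //; split=> [|l /negbTE l_neq].
  by have := le_b (y j); rewrite eqxx.
by have := le_b l; rewrite l_neq.
Qed.

Lemma single_row_feasible a i gamma :
  dual_feasible y C a -> a i (y i) < C i -> \sum_(l < L) gamma l = 0 ->
  (forall l, a i l = 0 -> gamma l = 0) ->
  exists2 d, 0 < d & forall t, `|t| <= d ->
    dual_feasible y C (fun j l => a j l + t * single_row i gamma j l).
Proof.
move=> /dual_feasibleP feas ay_lt gamma_sum gamma_supp.
pose ub l := if l == y i then C i else 0.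
have [d d_gt0 d_le] : exists2 d, 0 < d &
    {in [pred l | gamma l != 0], forall l, d <= (ub l - a i l) / `|gamma l|}.
  apply: finite_pos_lower_bound => l; rewrite inE => gamma_l.
  rewrite divr_gt0 ?normr_gt0 // subr_gt0 /ub.
  case: eqP => [-> // | /eqP /negbTE l_neq].
  have := (feas i).2 l; rewrite l_neq le_eqVlt => /orP[/eqP a_l | //].
  by move: gamma_l; rewrite gamma_supp ?eqxx.
exists d => // t t_le; apply/dual_feasibleP => j.
rewrite /single_row; have [-> | j_neq] := eqVneq j i; last first.
  under eq_bigr do rewrite mulr0n mul0r mulr0 addr0.
  have [sum_a le_a] := feas j.
  by split=> // l; rewrite mulr0n mul0r mulr0 addr0.
have [sum_a le_a] := feas i.
under eq_bigr do rewrite mulr1n mul1r.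
split=> [|l].
  by rewrite big_split /= -mulr_sumr gamma_sum sum_a mulr0 addr0.
rewrite mulr1n mul1r; have [-> | gamma_l] := eqVneq (gamma l) 0.
  by rewrite mulr0 addr0 le_a.
have := d_le l gamma_l; rewrite ler_pdivlMr ?normr_gt0 // -/(ub l) => d_gamma.
have t_gamma : t * gamma l <= d * `|gamma l|.
  apply: le_trans (ler_norm _) _; rewrite normrM.
  by apply: ler_wpM2r.
rewrite -/(ub l); lra.
Qed.

Lemma optimal_row_stationary a i gamma :
  dual_optimal K x y C e a -> a i (y i) < C i -> \sum_(l < L) gamma l = 0 ->
  (forall l, a i l = 0 -> gamma l = 0) ->
  \sum_(l < L) gamma l * grad_term K x e a i l = 0.
Proof.
move=> [feas opt] ay_lt gamma_sum gamma_supp.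
have [d d_gt0 feas_t] := single_row_feasible feas ay_lt gamma_sum gamma_supp.
pose c := kform (single_row i gamma) (single_row i gamma) / 2.
apply: (quadratic_ge0_near0 d _ c d_gt0) => t t_le.
have := opt _ (feas_t t t_le).
by rewrite dual_obj_shift single_row_slope /c; lra.
Qed.

Lemma optimal_row_orthogonal a i :
  dual_optimal K x y C e a -> a i (y i) < C i ->
  \sum_(l < L) a i l * grad_term K x e a i l = 0.
Proof.
move=> opt ay_lt; apply: optimal_row_stationary => //.
exact: (opt.1 i).1.
Qed.

Lemma optimal_grad_eq a i k :
  dual_optimal K x y C e a -> a i (y i) < C i ->
  a i (y i) != 0 -> a i k != 0 ->
  grad_term K x e a i k = grad_term K x e a i (y i).
Proof.
move=> opt ay_lt ay_neq0 ak_neq0.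
pose gamma l : R := (l == k)%:R - (l == y i)%:R.
apply/eqP; rewrite -subr_eq0; apply/eqP.
rewrite -(sum_natr_eq_mul k (grad_term K x e a i)).
rewrite -(sum_natr_eq_mul (y i) (grad_term K x e a i)) -sumrB.
under eq_bigr do rewrite -mulrBl.
apply: (optimal_row_stationary (gamma := gamma)) => //.
  by rewrite sumrB !sum_natr_eq subrr.
move=> l al_eq0; rewrite /gamma.
have /negbTE -> : l != k by apply: contraNneq ak_neq0 => <-; rewrite al_eq0.
have /negbTE -> : l != y i by apply: contraNneq ay_neq0 => <-; rewrite al_eq0.
by rewrite subrr.
Qed.

End DualProblem.

Theorem lemmaA1 (R : realFieldType) (X : Type) (K : X -> X -> R)
  (n m L : nat) (xtr : 'I_n -> X) (ytr : 'I_n -> 'I_L) (xu : 'I_m -> X)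
  (C Cs Delta : R) (a : aug_idx n m L -> 'I_L -> R) :
  psd_kernel K -> 0 < C -> 0 < Cs -> 0 <= Delta ->
  dual_optimal K (aug_x xtr xu) (aug_y ytr) (aug_C C Cs) (aug_e ytr Delta) a ->
  forall i : aug_idx n m L,
    0 < a i (aug_y ytr i) < aug_C C Cs i ->
    let g := grad_term K (aug_x xtr xu) (aug_e ytr Delta) a i in
    [/\ \sum_(k < L) a i k * g k = 0,
        (forall k : 'I_L, k != aug_y ytr i -> a i k < 0 -> g k = g (aug_y ytr i))
      & (forall gamma : 'I_L -> R, \sum_(k < L) gamma k = 0 ->
           (forall k, a i k = 0 -> gamma k = 0) ->
           \sum_(k < L) gamma k * g k = 0)].
Proof.
move=> [K_sym _] _ _ _ opt i /andP[ay_gt0 ay_lt] g.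
split=> [|k _ ak_lt0|gamma]; rewrite {}/g.
- exact: (optimal_row_orthogonal K_sym opt).
- exact: (optimal_grad_eq K_sym opt ay_lt (lt0r_neq0 ay_gt0) (ltr0_neq0 ak_lt0)).
- exact: (optimal_row_stationary K_sym opt).
Qed.
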